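(* Let $\alpha\subseteq E$, let $\hat{\mathbb{G}},\mathbb{G}$ be $E$-groups and let $h:\hat{\mathbb{G}}[\alpha]\to\mathbb{G}[\alpha]$ be a group homomorphism with $h(e)=e$ for all $e\in\alpha$ whose restriction to $\hat{\mathbb{G}}[\alpha']$ is injective for every $\alpha'\subsetneq\alpha$. If $\mathbb{G}[\alpha]$ is $N$-acyclic (as an $\alpha$-group) for some $N\ge2$, then $\hat{\mathbb{G}}[\alpha]$ is $N$-acyclic.
   Context: Let $E$ be a finite set. An $E$-group is a group $\mathbb{G}$ together with an inclusion $E\subseteq\mathbb{G}$ such that $E$ generates $\mathbb{G}$ and every $e\in E$ satisfies $e\neq1$, $e^2=1$. For $\alpha\subseteq E$, $\mathbb{G}[\alpha]$ is the subgroup generated by $\alpha$, itself an $\alpha$-group. A coset cycle of length $n\ge2$ in an $\alpha$-group $\mathbb{K}$ is a cyclically indexed family $(g_i,\alpha_i)_{i\in\mathbb{Z}_n}$ with $g_i\in\mathbb{K}$, $\alpha_i\subseteq\alpha$, such that for all $i$: $g_{i+1}\in g_i\mathbb{K}[\alpha_i]$ and $g_i\mathbb{K}[\alpha_i\cap\alpha_{i-1}]\cap g_{i+1}\mathbb{K}[\alpha_i\cap\alpha_{i+1}]=\emptyset$. $\mathbb{K}$ is $N$-acyclic if it admits no coset cycle of length $n$ with $2\le n\le N$. *)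

From mathcomp Require Import all_boot.

Set Implicit Arguments.
Unset Strict Implicit.
Unset Printing Implicit Defensive.

Record group := Group {
  carrier :> Type;
  gmul : carrier -> carrier -> carrier;
  gone : carrier;
  ginv : carrier -> carrier;
  gmulA : forall x y z, gmul x (gmul y z) = gmul (gmul x y) z;
  gmul1g : forall x, gmul gone x = x;
  gmulVg : forall x, gmul (ginv x) x = gone
}.

Inductive span (G : group) (S : G -> Prop) : G -> Prop :=
| span_gen x : S x -> span S x
| span_one : span S (gone G)
| span_mul x y : span S x -> span S y -> span S (gmul x y)
| span_inv x : span S x -> span S (ginv x).

Record Egroup (E : finType) := EGroup {
  egrp :> group;
  emb : E -> egrp;
  emb_inj : injective emb;
  emb_gen : forall x, span (fun y => exists e, y = emb e) x;
  emb_ne1 : forall e, emb e <> gone egrp;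
  emb_inv : forall e, gmul (emb e) (emb e) = gone egrp
}.

Definition gen (E : finType) (G : Egroup E) (a : {set E}) : G -> Prop :=
  span (fun y => exists2 e, e \in a & y = emb G e).
Arguments gen {E} G a _.

Definition in_coset (E : finType) (G : Egroup E) (g : G) (b : {set E}) (x : G) : Prop :=
  exists2 k, gen G b k & x = gmul g k.

Definition coset_cycle (E : finType) (G : Egroup E) (alpha : {set E}) (n : nat)
    (g : 'I_n -> G) (a : 'I_n -> {set E}) : Prop :=
  [/\ forall i, gen G alpha (g i),
      forall i, a i \subset alpha,
      forall i, in_coset (g i) (a i) (g (ordS i)) &
      forall i x, ~ (in_coset (g i) (a i :&: a (ord_pred i)) x /\
                     in_coset (g (ordS i)) (a i :&: a (ordS i)) x)].
Arguments coset_cycle {E} G alpha {n} g a.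

Definition N_acyclic (E : finType) (G : Egroup E) (alpha : {set E}) (N : nat) : Prop :=
  forall n, 2 <= n <= N ->
  forall (g : 'I_n -> G) (a : 'I_n -> {set E}), ~ coset_cycle G alpha g a.

(* A homomorphism fixing the generators maps each Ĝ[β] (β ⊆ α) onto G[β],
   and every coset cycle only uses proper subsets α_i ⊊ α, on whose subgroups
   h is injective.  Hence h sends a coset cycle of Ĝ[α] to one of G[α] of the
   same length: if the images of two consecutive cosets g_i Ĝ[α_i ∩ α_(i-1)]
   and g_(i+1) Ĝ[α_i ∩ α_(i+1)] met, lifting the meeting point and cancelling
   inside the injective part Ĝ[α_i] would make the original cosets meet. *)
From mathcomp Require Import all_boot.

Set Implicit Arguments.
Unset Strict Implicit.
Unset Printing Implicit Defensive.

Section GroupFacts.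
Variable G : group.

Lemma gmulgV (x : G) : gmul x (ginv x) = gone G.
Proof.
set y := ginv x.
rewrite -[gmul x y]gmul1g -(gmulVg y) -gmulA [gmul y (gmul x y)]gmulA.
by rewrite /y gmulVg gmul1g.
Qed.

Lemma gmulg1 (x : G) : gmul x (gone G) = x.
Proof. by rewrite -(gmulVg x) gmulA gmulgV gmul1g. Qed.

Lemma gmulgI (z : G) : injective (gmul z).
Proof. by move=> x y Exy; rewrite -[x]gmul1g -[y]gmul1g -(gmulVg z) -!gmulA Exy. Qed.

Lemma gmul_eq1_ginv (x y : G) : gmul x y = gone G -> x = ginv y.
Proof. by move=> Exy; rewrite -[x]gmulg1 -(gmulgV y) gmulA Exy gmul1g. Qed.

End GroupFacts.

Lemma gen_mono (E : finType) (G : Egroup E) (a b : {set E}) (x : G) :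
  a \subset b -> gen G a x -> gen G b x.
Proof.
move=> sab; elim=> [y [e ea ->]| |y z _ Hy _ Hz|y _ Hy].
- by apply: span_gen; exists e => //; apply: (subsetP sab).
- exact: span_one.
- exact: span_mul.
- exact: span_inv.
Qed.

(* With α_i = α, the element g_(i+2) lies in both cosets compared at index i+1. *)
Lemma coset_cycle_proper (E : finType) (G : Egroup E) (alpha : {set E}) n
    (g : 'I_n -> G) (a : 'I_n -> {set E}) :
  coset_cycle G alpha g a -> forall i, a i \proper alpha.
Proof.
case=> _ sa step disj i; rewrite properEneq sa andbT; apply/eqP => ai_full.
apply: (disj (ordS i) (g (ordS (ordS i)))); split.
- rewrite ordSK ai_full (setIidPl (sa _)); exact: step.
- by exists (gone G); [exact: span_one | rewrite gmulg1].
Qed.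

Section Homomorphism.
Variables (E : finType) (alpha : {set E}) (Gh G : Egroup E) (h : Gh -> G).
Hypothesis h_morph : forall x y, gen Gh alpha x -> gen Gh alpha y ->
  h (gmul x y) = gmul (h x) (h y).
Hypothesis h_fix : forall e, e \in alpha -> h (emb Gh e) = emb G e.

Lemma morph1 : h (gone Gh) = gone G.
Proof.
apply: (@gmulgI _ (h (gone Gh))).
by rewrite gmulg1 -h_morph ?gmul1g //; exact: span_one.
Qed.

Lemma morphV x : gen Gh alpha x -> h (ginv x) = ginv (h x).
Proof.
move=> Hx; apply: gmul_eq1_ginv.
by rewrite -h_morph ?gmulVg ?morph1 //; exact: span_inv.
Qed.

Lemma gen_morph (b : {set E}) x : b \subset alpha -> gen Gh b x -> gen G b (h x).
Proof.
move=> sb; elim=> [y [e eb ->]| |y z Gy Hy Gz Hz|y Gy Hy].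
- by rewrite h_fix; [apply: span_gen; exists e | exact: (subsetP sb)].
- rewrite morph1; exact: span_one.
- by rewrite h_morph; [exact: span_mul | exact: gen_mono Gy | exact: gen_mono Gz].
- by rewrite morphV; [exact: span_inv | exact: gen_mono Gy].
Qed.

Lemma gen_morph_surj (b : {set E}) y : b \subset alpha -> gen G b y ->
  exists2 x, gen Gh b x & h x = y.
Proof.
move=> sb; elim=> [_ [e eb ->]| |_ _ _ [x1 G1 <-] _ [x2 G2 <-]|_ _ [x G1 <-]].
- exists (emb Gh e); first by apply: span_gen; exists e.
  by rewrite h_fix //; exact: (subsetP sb).
- by exists (gone Gh); [exact: span_one | exact: morph1].
- exists (gmul x1 x2); first exact: span_mul.
  by rewrite h_morph //; [exact: gen_mono G1 | exact: gen_mono G2].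
- exists (ginv x); first exact: span_inv.
  by rewrite morphV //; exact: gen_mono G1.
Qed.

Lemma in_coset_morph (b : {set E}) x y : b \subset alpha -> gen Gh alpha x ->
  in_coset x b y -> in_coset (h x) b (h y).
Proof.
move=> sb Gx [k Hk ->]; exists (h k); first exact: gen_morph.
by rewrite h_morph //; exact: gen_mono Hk.
Qed.

Hypothesis h_inj : forall alpha' : {set E}, alpha' \proper alpha ->
  forall x y, gen Gh alpha' x -> gen Gh alpha' y -> h x = h y -> x = y.

Lemma morph_coset_disjoint (b b1 b2 : {set E}) x y :
    b \proper alpha -> b1 \subset b -> b2 \subset b ->
    gen Gh alpha x -> in_coset x b y ->
    (forall z, ~ (in_coset x b1 z /\ in_coset y b2 z)) ->
  forall z, ~ (in_coset (h x) b1 z /\ in_coset (h y) b2 z).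
Proof.
move=> pb sb1 sb2 Gx [k Hk ->] disj _ [[u Hu ->] [v Hv Euv]].
have sb := proper_sub pb.
have [u' Hu' Eu] := gen_morph_surj (subset_trans sb1 sb) Hu.
have [v' Hv' Ev] := gen_morph_surj (subset_trans sb2 sb) Hv.
rewrite -Eu -Ev in Euv.
have Gk : gen Gh alpha k := gen_mono sb Hk.
have Gv : gen Gh alpha v' := gen_mono (subset_trans sb2 sb) Hv'.
have lift_eq : u' = gmul k v'.
  apply: (h_inj pb); [exact: gen_mono Hu' | exact: span_mul (gen_mono _ Hv') |].
  apply: (@gmulgI _ (h x)).
  by rewrite Euv !h_morph ?gmulA.
apply: (disj (gmul x u')); split; first by exists u'.
by exists v' => //; rewrite lift_eq gmulA.
Qed.

Lemma morph_coset_cycle n (g : 'I_n -> Gh) (a : 'I_n -> {set E}) :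
  coset_cycle Gh alpha g a -> coset_cycle G alpha (fun i => h (g i)) a.
Proof.
move=> cyc; have a_proper := coset_cycle_proper cyc.
case: cyc => Gg sa step disj; split=> // [i|i|i].
- exact: gen_morph (subxx alpha) (Gg i).
- exact: in_coset_morph.
- apply: (morph_coset_disjoint (a_proper i)) => //; exact: subsetIl.
Qed.

End Homomorphism.

Theorem mainTheorem7 (E : finType) (alpha : {set E}) (Gh G : Egroup E)
    (h : Gh -> G)
    (h_into : forall x, gen Gh alpha x -> gen G alpha (h x))
    (h_morph : forall x y, gen Gh alpha x -> gen Gh alpha y ->
                 h (gmul x y) = gmul (h x) (h y))
    (h_fix : forall e, e \in alpha -> h (emb Gh e) = emb G e)
    (h_inj : forall alpha' : {set E}, alpha' \proper alpha ->
               forall x y, gen Gh alpha' x -> gen Gh alpha' y -> h x = h y -> x = y)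
    (N : nat) (HN : 2 <= N) :
  N_acyclic G alpha N -> N_acyclic Gh alpha N.
Proof.
move=> acyclic n n_range g a cyc.
exact: (acyclic n n_range _ a (morph_coset_cycle h_morph h_fix h_inj cyc)).
Qed.
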